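(* Fix $\alpha\in(0,1)$ and let $t=\lfloor K^{1+\alpha}\rfloor$. Then \[ \lim_{K\to\infty}\mathbb{P}\left(D_t<6K^{2\alpha}\right)=1. \]
   Context: Incremental construction. Fix an integer $K\ge2$, $[n]=\{1,\dots,n\}$. A random $K\times K$ matrix $\Psi$ is filled with $1,\dots,K^2$, the integer $s$ placed at step $s$. After step $t$, $R_t$, $C_t$ are the numbers of nonempty rows and columns (nonempty rows are $1,\dots,R_t$, nonempty columns $1,\dots,C_t$), and $M_t$ is the submatrix with rows $[R_t]$, columns $[C_t]$; $R_0=C_0=0$. Step 1: $\Psi(1,1)=1$ ($R_1=C_1=1$). For $t=1,\dots,K^2-1$, step $t+1$: with conditional probability $\rho_{t+1}=\frac{(K-R_t)K}{K^2-t}$ a new row is created ($R_{t+1}=R_t+1$), and independently with probability $\frac{K-C_t}{K}$ also a new column ($C_{t+1}=C_t+1$, $\Psi(R_{t+1},C_{t+1})=t+1$), otherwise $C_{t+1}=C_t$ and $\Psi(R_{t+1},Z)=t+1$ with $Z$ uniform in $[C_t]$. With probability $1-\rho_{t+1}$, no new row is created ($R_{t+1}=R_t$) and a uniformly random empty cell $(X,Y)$ among rows $[R_t]$ is chosen, generated by rejection sampling: cells are drawn independently and uniformly among the $R_tK$ cells of rows $[R_t]$ until an empty one is drawn; let $U_{t+1}=1$ if the first draw is empty and $U_{t+1}=0$ otherwise (so its conditional probability of being $1$ is $1-\frac{t}{R_tK}$). If $Y>C_t$ then $C_{t+1}=C_t+1$ and $\Psi(X,C_{t+1})=t+1$; otherwise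 $C_{t+1}=C_t$ and $\Psi(X,Y)=t+1$. Define $D_t$ as the number of steps $s\le t$ at which no new row is created and $U_s=0$. *)

From Stdlib Require Import Reals Lra Lia Arith List.
Import ListNotations.
Open Scope R_scope.

(* State of the incremental construction after some step:
   R_t, C_t, D_t and the filled cells of Psi as triples (row, column, value). *)
Record state := mkState { sR : nat; sC : nat; sD : nat; cells : list (nat * nat * nat) }.

Definition filled (s : state) (x y : nat) : bool :=
  existsb (fun c => match c with (a, b, _) => andb (Nat.eqb a x) (Nat.eqb b y) end) (cells s).

Definition empties (K : nat) (s : state) : list (nat * nat) :=
  filter (fun p => negb (filled s (fst p) (snd p)))
         (list_prod (seq 1 (sR s)) (seq 1 K)).

(* Transition kernel of step t+1, given the state after step t.
   In the "no new row" branch, the rejection sampling is encoded exactly by the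
   joint law of (U_{t+1}, (X,Y)):  P(U=1, (X,Y)=c) = 1/(R_t K) and
   P(U=0, (X,Y)=c) = 1/#empty - 1/(R_t K) for every empty cell c. *)
Definition step (K t : nat) (s : state) : list (R * state) :=
  let Rt := sR s in let Ct := sC s in let Dt := sD s in
  let rho := INR ((K - Rt) * K) / (INR (K * K) - INR t) in
  let pnc := INR (K - Ct) / INR K in
  let E := empties K s in
  [(rho * pnc, mkState (S Rt) (S Ct) Dt ((S Rt, S Ct, S t) :: cells s))]
  ++ map (fun z => (rho * (1 - pnc) * / INR Ct,
                    mkState (S Rt) Ct Dt ((S Rt, z, S t) :: cells s)))
         (seq 1 Ct)
  ++ flat_map (fun p =>
        let x := fst p in let y := snd p in
        let C' := if Nat.ltb Ct y then S Ct else Ct in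
        let col := if Nat.ltb Ct y then S Ct else y in
        [((1 - rho) * / INR (Rt * K),
          mkState Rt C' Dt ((x, col, S t) :: cells s));
         ((1 - rho) * (/ INR (length E) - / INR (Rt * K)),
          mkState Rt C' (S Dt) ((x, col, S t) :: cells s))])
       E.

Definition state0 : state := mkState 0 0 0 [].
Definition state1 : state := mkState 1 1 0 [(1%nat, 1%nat, 1%nat)].

Fixpoint dist (K n : nat) {struct n} : list (R * state) :=
  match n with
  | O => [(1%R, state0)]
  | S m =>
    match m with
    | O => [(1%R, state1)]
    | S _ => flat_map (fun ps : R * state => let (p, s) := ps in
                         map (fun qs : R * state => let (q, s') := qs in (p * q, s')) (step K m s))
                      (dist K m)
    end
  end.

Definition probD_lt (K n : nat) (b : R) : R :=
  fold_right Rplus 0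
    (map (fun ps : R * state => let (p, s) := ps in if Rlt_dec (INR (sD s)) b then p else 0)
         (dist K n)).

Definition tK (alpha : R) (K : nat) : nat :=
  Z.to_nat (Int_part (Rpower (INR K) (1 + alpha))).

(** Chernoff bound for D_t.  Given the state after step m, D increases at step m+1
    exactly when no new row is created and the first rejection-sampling draw hits one
    of the m filled cells among the R_m K cells of the existing rows, which happens with
    probability (R_m K - m)/(K^2 - m) * m/(R_m K) <= m/(K^2 - m).  Hence E[e^D] grows by
    a factor at most 1 + 2m/(K^2 - m) per step, so E[e^{D_t}] <= exp(2t^2/(K^2 - t))
    <= exp(4 K^{2 alpha}) for t <= K^{1+alpha} <= K^2/2, and Markov's inequality gives
    P(D_t >= 6 K^{2 alpha}) <= exp(-2 K^{2 alpha}). *)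

From Pilot Require Import Defs.
From Stdlib Require Import Reals.
From Stdlib Require Import Lra Lia List FinFun ZArith.
Import ListNotations.
Open Scope R_scope.

Definition expect {A : Type} (g : A -> R) (L : list (R * A)) : R :=
  fold_right Rplus 0 (map (fun ps => fst ps * g (snd ps)) L).

Definition law_in {A : Type} (P : A -> Prop) (L : list (R * A)) : Prop :=
  forall ps, In ps L -> 0 <= fst ps /\ (0 < fst ps -> P (snd ps)).

Definition bind {A B : Type} (L : list (R * A)) (k : A -> list (R * B)) : list (R * B) :=
  flat_map (fun ps : R * A => let (p, a) := ps in
              map (fun qb : R * B => let (q, b) := qb in (p * q, b)) (k a)) L.

Section Expectation.
Context {A : Type}.
Implicit Types (g h : A -> R) (L : list (R * A)) (P : A -> Prop).

Lemma expect_app g L1 L2 : expect g (L1 ++ L2) = expect g L1 + expect g L2.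
Proof.
  unfold expect; rewrite map_app, fold_right_app.
  induction L1 as [|ps L1 IH]; simpl; [ring|]. simpl in IH; lra.
Qed.

Lemma expect_map_const {B : Type} g (f : B -> R * A) (l : list B) w v :
  (forall x, In x l -> fst (f x) = w /\ g (snd (f x)) = v) ->
  expect g (map f l) = INR (length l) * w * v.
Proof.
  induction l as [|x l IH]; intros Hf; [simpl; unfold expect; simpl; ring|].
  cbn [map length]; unfold expect in *; cbn [map fold_right].
  rewrite IH by (intros; apply Hf; right; assumption).
  destruct (Hf x (or_introl eq_refl)) as [-> ->]; rewrite S_INR; ring.
Qed.

Lemma expect_flat_map_const {B : Type} g (f : B -> list (R * A)) (l : list B) k :
  (forall x, In x l -> expect g (f x) = k) ->
  expect g (flat_map f l) = INR (length l) * k.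
Proof.
  induction l as [|x l IH]; intros Hf; [simpl; unfold expect; simpl; ring|].
  cbn [flat_map length]; rewrite expect_app, IH by (intros; apply Hf; right; assumption).
  rewrite (Hf x (or_introl eq_refl)), S_INR; ring.
Qed.

Lemma expect_scale c g L : expect (fun x => c * g x) L = c * expect g L.
Proof. induction L as [|ps L IH]; unfold expect in *; simpl; [ring|]; rewrite IH; ring. Qed.

Lemma expect_plus g h L : expect (fun x => g x + h x) L = expect g L + expect h L.
Proof. induction L as [|ps L IH]; unfold expect in *; simpl; [ring|]; rewrite IH; ring. Qed.

Lemma expect_le P g h L : law_in P L -> (forall x, P x -> g x <= h x) ->
  expect g L <= expect h L.
Proof.
  induction L as [|[p x] L IH]; intros HL Hgh; unfold expect in *; simpl; [lra|].
  destruct (HL (p, x) (or_introl eq_refl)) as [Hp HPx]; simpl in Hp, HPx.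
  apply Rplus_le_compat; [|apply IH; [intros ps Hps; apply HL; right|]; assumption].
  destruct Hp as [Hp|<-]; [apply Rmult_le_compat_l; auto; lra|lra].
Qed.

Lemma expect_ext P g h L : law_in P L -> (forall x, P x -> g x = h x) ->
  expect g L = expect h L.
Proof.
  intros HL Hgh; apply Rle_antisym; apply (expect_le P); auto;
    intros x Hx; rewrite (Hgh x Hx); lra.
Qed.

(** Exponential Markov inequality, in two-sided form since probabilities are at most 1. *)
Lemma expect_lt_indicator_bound P (f : A -> R) b L :
  law_in P L -> expect (fun _ => 1) L = 1 ->
  Rabs (expect (fun x => if Rlt_dec (f x) b then 1 else 0) L - 1)
    <= exp (- b) * expect (fun x => exp (f x)) L.
Proof.
  intros HL Hmass; set (ind := fun x => if Rlt_dec (f x) b then 1 else 0).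
  assert (Hup : expect ind L <= 1).
  { rewrite <- Hmass; apply (expect_le P); auto.
    intros x _; unfold ind; destruct Rlt_dec; lra. }
  assert (Hlow : 1 <= expect ind L + exp (- b) * expect (fun x => exp (f x)) L).
  { rewrite <- Hmass, <- expect_scale, <- expect_plus; apply (expect_le P); auto.
    intros x _; unfold ind; rewrite <- exp_plus.
    pose proof (exp_pos (- b + f x)); pose proof (exp_ineq1_le (- b + f x)).
    destruct Rlt_dec; lra. }
  unfold Rabs; destruct Rcase_abs; lra.
Qed.

End Expectation.

Lemma expect_reweight {B : Type} (g : B -> R) p (l : list (R * B)) :
  expect g (map (fun qb : R * B => let (q, b) := qb in (p * q, b)) l) = p * expect g l.
Proof.
  induction l as [|[q b] l IH]; unfold expect in *; simpl; [ring|]; rewrite IH; ring.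
Qed.

Lemma expect_bind {A B : Type} (g : B -> R) (L : list (R * A)) (k : A -> list (R * B)) :
  expect g (bind L k) = expect (fun x => expect g (k x)) L.
Proof.
  induction L as [|[p x] L IH]; [reflexivity|].
  unfold bind in *; cbn [flat_map]; rewrite expect_app, expect_reweight, IH; reflexivity.
Qed.

Lemma law_in_bind {A B : Type} (P : A -> Prop) (Q : B -> Prop) (L : list (R * A))
  (k : A -> list (R * B)) :
  law_in P L -> (forall x, P x -> law_in Q (k x)) -> law_in Q (bind L k).
Proof.
  intros HL Hk qs Hqs; unfold bind in Hqs.
  apply in_flat_map in Hqs as [[p x] [Hx Hqs]].
  apply in_map_iff in Hqs as [[q y] [<- Hy]]; simpl.
  destruct (HL _ Hx) as [Hp HPx]; simpl in Hp, HPx.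
  destruct Hp as [Hp|<-]; [|split; [lra|intros; lra]].
  destruct (Hk x (HPx Hp) _ Hy) as [Hq HQy]; simpl in Hq, HQy.
  split; [apply Rmult_le_pos; lra|].
  intros Hpq; apply HQy; destruct Hq as [Hq|<-]; [assumption|lra].
Qed.

Lemma probD_lt_expect K n b :
  probD_lt K n b = expect (fun s => if Rlt_dec (INR (sD s)) b then 1 else 0) (Defs.dist K n).
Proof.
  unfold probD_lt, expect; induction (Defs.dist K n) as [|[p s] l IH]; simpl; [reflexivity|].
  rewrite IH; destruct Rlt_dec; ring.
Qed.

Definition valid_state (K n : nat) (s : state) : Prop :=
  (1 <= sR s <= K)%nat /\ (1 <= sC s <= K)%nat /\ length (cells s) = n /\
  NoDup (map fst (cells s)) /\
  (forall c, In c (cells s) -> (1 <= fst (fst c) <= sR s)%nat /\ (1 <= snd (fst c) <= sC s)%nat).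

Lemma filled_iff s x y : filled s x y = true <-> In (x, y) (map fst (cells s)).
Proof.
  unfold filled; rewrite existsb_exists; split.
  - intros [[[a b] v] [Hc Hab]]; apply andb_prop in Hab as [Ha Hb].
    apply Nat.eqb_eq in Ha, Hb; subst.
    apply in_map_iff; exists (x, y, v); auto.
  - intros Hxy; apply in_map_iff in Hxy as [[[a b] v] [E Hc]]; simpl in E; inversion E; subst.
    exists (x, y, v); split; [assumption|]; simpl; rewrite !Nat.eqb_refl; reflexivity.
Qed.

Lemma NoDup_list_prod {A B : Type} (l : list A) (l' : list B) :
  NoDup l -> NoDup l' -> NoDup (list_prod l l').
Proof.
  induction l as [|a l IH]; intros Hl Hl'; simpl; [constructor|].
  inversion Hl; subst; apply NoDup_app.
  - apply Injective_map_NoDup; auto; intros x y E; inversion E; auto.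
  - apply IH; auto.
  - intros p Hp Hq; apply in_map_iff in Hp as [y [<- _]].
    apply in_prod_iff in Hq as [Ha _]; contradiction.
Qed.

Lemma length_empties K n s : valid_state K n s ->
  (n <= sR s * K)%nat /\ length (empties K s) = (sR s * K - n)%nat.
Proof.
  intros (HR & HC & Hlen & Hnd & Hin).
  set (P := list_prod (seq 1 (sR s)) (seq 1 K)).
  set (f := fun p : nat * nat => filled s (fst p) (snd p)).
  pose proof (filter_length f P) as Hsplit.
  assert (HP : length P = (sR s * K)%nat) by (unfold P; rewrite length_prod, !length_seq; auto).
  assert (HNP : NoDup P) by (apply NoDup_list_prod; apply seq_NoDup).
  assert (Hsub : incl (map fst (cells s)) (filter f P)).
  { intros p Hp; apply filter_In; split.
    - apply in_map_iff in Hp as [[[a b] v] [<- Hc]]; destruct (Hin _ Hc); simpl in *.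
      apply in_prod_iff; split; apply in_seq; lia.
    - unfold f; destruct p; apply filled_iff; assumption. }
  assert (Hsup : incl (filter f P) (map fst (cells s))).
  { intros p Hp; apply filter_In in Hp as [_ Hp]; destruct p; apply filled_iff; assumption. }
  pose proof (NoDup_incl_length Hnd Hsub).
  pose proof (NoDup_incl_length (NoDup_filter f HNP) Hsup).
  rewrite length_map in *.
  change (length (empties K s)) with (length (filter (fun x => negb (f x)) P)).
  lia.
Qed.

Lemma valid_state_add K m s R' C' D' x y v : valid_state K m s ->
  (sR s <= R' <= K)%nat -> (sC s <= C' <= K)%nat -> (1 <= x <= R')%nat -> (1 <= y <= C')%nat ->
  ~ In (x, y) (map fst (cells s)) ->
  valid_state K (S m) (mkState R' C' D' ((x, y, v) :: cells s)).
Proof.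
  intros (HR & HC & Hlen & Hnd & Hin) HR' HC' Hx Hy Hxy.
  split; [simpl; lia|]; split; [simpl; lia|]; split; [simpl; lia|]; split.
  - constructor; assumption.
  - intros c [<-|Hc]; [simpl; lia|destruct (Hin c Hc); simpl; lia].
Qed.

Lemma unfilled_new_row K m s x y : valid_state K m s -> (sR s < x)%nat ->
  ~ In (x, y) (map fst (cells s)).
Proof.
  intros (_ & _ & _ & _ & Hin) Hx Hxy; apply in_map_iff in Hxy as [c [E Hc]].
  destruct (Hin c Hc) as [Hr _]; rewrite E in Hr; simpl in Hr; lia.
Qed.

Lemma unfilled_new_col K m s x y : valid_state K m s -> (sC s < y)%nat ->
  ~ In (x, y) (map fst (cells s)).
Proof.
  intros (_ & _ & _ & _ & Hin) Hy Hxy; apply in_map_iff in Hxy as [c [E Hc]].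
  destruct (Hin c Hc) as [_ Hc']; rewrite E in Hc'; simpl in Hc'; lia.
Qed.

Definition new_row_prob (K m : nat) (s : state) : R :=
  INR ((K - sR s) * K) / (INR (K * K) - INR m).

Definition new_col_prob (K : nat) (s : state) : R := INR (K - sC s) / INR K.

(** [D] increases iff no row is created and the first draw hits one of the [m] filled cells
    among the [sR s * K] cells of the existing rows. *)
Definition incr_prob (K m : nat) (s : state) : R :=
  (1 - new_row_prob K m s) * (INR m / INR (sR s * K)).

Lemma step_expect K m s (h : nat -> R) : (1 <= sC s)%nat ->
  expect (fun s' => h (sD s')) (step K m s) =
  new_row_prob K m s * h (sD s) +
  INR (length (empties K s)) *
    ((1 - new_row_prob K m s) * / INR (sR s * K) * h (sD s) +
     (1 - new_row_prob K m s) * (/ INR (length (empties K s)) - / INR (sR s * K)) * h (S (sD s))).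
Proof.
  intros HC; unfold step; fold (new_row_prob K m s) (new_col_prob K s).
  rewrite !expect_app.
  rewrite (expect_map_const _ _ _
             (new_row_prob K m s * (1 - new_col_prob K s) * / INR (sC s)) (h (sD s)))
    by (intros; split; reflexivity).
  erewrite expect_flat_map_const by (intros; unfold expect; simpl; reflexivity).
  rewrite length_seq; unfold expect at 1; simpl.
  assert (0 < INR (sC s)) by (apply lt_0_INR; lia).
  replace (INR (sC s) * (new_row_prob K m s * (1 - new_col_prob K s) * / INR (sC s)))
    with (new_row_prob K m s * (1 - new_col_prob K s)) by (field; lra).
  ring.
Qed.

Section StepAnalysis.

Variables (K m : nat) (s : state).
Hypotheses (Hs : valid_state K m s) (Hm : (m < K * K)%nat).

Lemma INR_length_empties : INR (length (empties K s)) = INR (sR s * K) - INR m.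
Proof.
  destruct (length_empties K m s Hs) as [Hle ->]; rewrite minus_INR by assumption; reflexivity.
Qed.

Lemma filled_cells_le : INR m <= INR (sR s * K).
Proof. apply le_INR, (length_empties K m s Hs). Qed.

Lemma row_cells_pos : 0 < INR (sR s * K).
Proof. destruct Hs as [HR _]; apply lt_0_INR; nia. Qed.

Lemma free_cells_pos : 0 < INR (K * K) - INR m.
Proof. pose proof (lt_INR _ _ Hm); lra. Qed.

Lemma one_sub_new_row_prob :
  1 - new_row_prob K m s = (INR (sR s * K) - INR m) / (INR (K * K) - INR m).
Proof.
  destruct Hs as [HR _]; pose proof free_cells_pos.
  unfold new_row_prob; rewrite !mult_INR, minus_INR by lia; rewrite mult_INR in *.
  field; lra.
Qed.

Lemma new_row_prob_bounds : 0 <= new_row_prob K m s <= 1.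
Proof.
  pose proof one_sub_new_row_prob; pose proof filled_cells_le; pose proof free_cells_pos.
  assert (0 <= 1 - new_row_prob K m s)
    by (rewrite one_sub_new_row_prob; apply Rle_mult_inv_pos; lra).
  split; [|lra].
  apply Rle_mult_inv_pos; [apply pos_INR|assumption].
Qed.

Lemma new_col_prob_bounds : 0 <= new_col_prob K s <= 1.
Proof.
  destruct Hs as (_ & HC & _); assert (0 < INR K) by (apply lt_0_INR; lia).
  unfold new_col_prob; split; [apply Rle_mult_inv_pos; [apply pos_INR|assumption]|].
  apply (Rmult_le_reg_r (INR K)); [assumption|].
  unfold Rdiv; rewrite Rmult_assoc, Rinv_l, Rmult_1_l, Rmult_1_r by lra.
  apply le_INR; lia.
Qed.

Lemma new_row_prob_pos_lt : 0 < new_row_prob K m s -> (sR s < K)%nat.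
Proof.
  intros Hp; destruct (Nat.eq_dec (sR s) K) as [E|]; [|destruct Hs; lia].
  unfold new_row_prob in Hp; rewrite E, Nat.sub_diag in Hp; simpl in Hp; lra.
Qed.

Lemma new_col_prob_pos_lt : 0 < new_col_prob K s -> (sC s < K)%nat.
Proof.
  intros Hp; destruct (Nat.eq_dec (sC s) K) as [E|]; [|destruct Hs as (_ & HC & _); lia].
  unfold new_col_prob in Hp; rewrite E, Nat.sub_diag in Hp; simpl in Hp; lra.
Qed.

Lemma valid_state_fill_empty x y D' : In (x, y) (empties K s) ->
  valid_state K (S m)
    (mkState (sR s) (if Nat.ltb (sC s) y then S (sC s) else sC s) D'
       ((x, if Nat.ltb (sC s) y then S (sC s) else y, S m) :: cells s)).
Proof.
  intros Hxy; unfold empties in Hxy; apply filter_In in Hxy as [Hxy Hnf].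
  apply in_prod_iff in Hxy as [Hx Hy]; apply in_seq in Hx, Hy; simpl in Hx, Hy, Hnf.
  destruct Hs as (HR & HC & _).
  destruct (Nat.ltb (sC s) y) eqn:Ey.
  - apply Nat.ltb_lt in Ey; apply valid_state_add; [assumption|lia|lia|lia|lia|].
    apply (unfilled_new_col K m); [assumption|lia].
  - apply Nat.ltb_ge in Ey; apply valid_state_add; [assumption|lia|lia|lia|lia|].
    intros Hin; apply filled_iff in Hin; rewrite Hin in Hnf; discriminate.
Qed.

Lemma step_law : law_in (valid_state K (S m)) (step K m s).
Proof.
  pose proof new_row_prob_bounds; pose proof new_col_prob_bounds; pose proof row_cells_pos.
  pose proof (proj1 Hs) as HR; pose proof (proj1 (proj2 Hs)) as HC.
  assert (0 < INR (sC s)) by (apply lt_0_INR; lia).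
  intros qs Hq; unfold step in Hq; fold (new_row_prob K m s) (new_col_prob K s) in Hq.
  apply in_app_iff in Hq as [Hq|Hq]; [|apply in_app_iff in Hq as [Hq|Hq]].
  - destruct Hq as [<-|[]]; simpl; split; [apply Rmult_le_pos; lra|].
    intros Hp; assert (Hr : (sR s < K)%nat) by (apply new_row_prob_pos_lt; nra).
    assert (Hc : (sC s < K)%nat) by (apply new_col_prob_pos_lt; nra).
    apply valid_state_add; [assumption|lia|lia|lia|lia|]; apply (unfilled_new_row K m); auto.
  - apply in_map_iff in Hq as [z [<- Hz]]; apply in_seq in Hz; simpl.
    assert (0 <= (1 - new_col_prob K s) * / INR (sC s))
      by (apply Rmult_le_pos; [|left; apply Rinv_0_lt_compat]; lra).
    split; [rewrite Rmult_assoc; apply Rmult_le_pos; lra|].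
    intros Hp; assert (Hr : (sR s < K)%nat) by (apply new_row_prob_pos_lt; nra).
    apply valid_state_add; [assumption|lia|lia|lia|lia|]; apply (unfilled_new_row K m); auto.
  - apply in_flat_map in Hq as [[x y] [Hxy Hq]].
    assert (He : 1 <= INR (length (empties K s))).
    { apply (le_INR 1); destruct (empties K s); [contradiction|simpl; lia]. }
    pose proof INR_length_empties; pose proof (pos_INR m).
    assert (/ INR (sR s * K) <= / INR (length (empties K s))) by (apply Rinv_le_contravar; lra).
    simpl in Hq; destruct Hq as [<-|[<-|[]]]; simpl;
      (split; [|intros; apply valid_state_fill_empty; assumption]);
      apply Rmult_le_pos; try lra; left; apply Rinv_0_lt_compat; lra.
Qed.

Lemma step_expect_sD (h : nat -> R) :
  expect (fun s' => h (sD s')) (step K m s) =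
  (1 - incr_prob K m s) * h (sD s) + incr_prob K m s * h (S (sD s)).
Proof.
  rewrite step_expect by (destruct Hs as (_ & HC & _); lia).
  pose proof row_cells_pos; pose proof free_cells_pos.
  assert (Hrho : new_row_prob K m s = 1 - (1 - new_row_prob K m s)) by ring.
  unfold incr_prob; rewrite Hrho, INR_length_empties, one_sub_new_row_prob.
  (* if the existing rows are full, [/ INR 0] occurs, but multiplied by [0] *)
  destruct (Req_dec (INR (sR s * K)) (INR m)) as [E|E].
  - rewrite E, Rminus_diag, Rmult_0_l; field; lra.
  - field; lra.
Qed.

Lemma incr_prob_bounds : 0 <= incr_prob K m s <= INR m / (INR (K * K) - INR m).
Proof.
  pose proof row_cells_pos; pose proof free_cells_pos; pose proof filled_cells_le.
  pose proof (pos_INR m).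
  unfold incr_prob; rewrite one_sub_new_row_prob.
  replace ((INR (sR s * K) - INR m) / (INR (K * K) - INR m) * (INR m / INR (sR s * K)))
    with (INR m / (INR (K * K) - INR m) * ((INR (sR s * K) - INR m) / INR (sR s * K)))
    by (field; lra).
  assert (0 <= INR m / (INR (K * K) - INR m)) by (apply Rle_mult_inv_pos; lra).
  assert (0 <= (INR (sR s * K) - INR m) / INR (sR s * K) <= 1).
  { split; [apply Rle_mult_inv_pos; lra|].
    apply (Rmult_le_reg_r (INR (sR s * K))); [lra|field_simplify; lra]. }
  split; [apply Rmult_le_pos; lra|].
  rewrite <- (Rmult_1_r (INR m / _)) at 2; apply Rmult_le_compat_l; lra.
Qed.

Lemma step_mass : expect (fun _ => 1) (step K m s) = 1.
Proof. rewrite (step_expect_sD (fun _ => 1)); ring. Qed.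

Lemma step_exp_moment :
  expect (fun s' => exp (INR (sD s'))) (step K m s)
    <= exp (2 * (INR m / (INR (K * K) - INR m))) * exp (INR (sD s)).
Proof.
  rewrite (step_expect_sD (fun d => exp (INR d))), S_INR, exp_plus.
  pose proof incr_prob_bounds; pose proof exp_le_3; pose proof (exp_pos (INR (sD s))).
  pose proof (exp_ineq1_le (2 * (INR m / (INR (K * K) - INR m)))).
  assert (1 <= exp 1) by (pose proof (exp_ineq1_le 1); lra).
  set (p := incr_prob K m s) in *; set (q := INR m / (INR (K * K) - INR m)) in *.
  replace ((1 - p) * exp (INR (sD s)) + p * (exp (INR (sD s)) * exp 1))
    with ((1 + p * (exp 1 - 1)) * exp (INR (sD s))) by ring.
  apply Rmult_le_compat_r; nra.
Qed.

End StepAnalysis.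

Lemma dist_SS K m : Defs.dist K (S (S m)) = bind (Defs.dist K (S m)) (step K (S m)).
Proof. reflexivity. Qed.

Lemma valid_state1 K : (1 <= K)%nat -> valid_state K 1 state1.
Proof.
  intros HK; split; [simpl; lia|]; split; [simpl; lia|]; split; [reflexivity|]; split.
  - constructor; [intros []|constructor].
  - intros c [<-|[]]; simpl; lia.
Qed.

Lemma dist_law K n : (n < K * K)%nat ->
  law_in (valid_state K (S n)) (Defs.dist K (S n)).
Proof.
  induction n as [|n IH]; intros Hn.
  - intros ps [<-|[]]; simpl; split; [lra|intros; apply valid_state1; nia].
  - rewrite dist_SS; apply (law_in_bind (valid_state K (S n))); [apply IH; lia|].
    intros s Hs; apply step_law; assumption.
Qed.

Lemma dist_mass K n : (n < K * K)%nat ->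
  expect (fun _ => 1) (Defs.dist K (S n)) = 1.
Proof.
  induction n as [|n IH]; intros Hn; [unfold expect; simpl; ring|].
  rewrite dist_SS, expect_bind; transitivity (expect (fun _ => 1) (Defs.dist K (S n)));
    [|apply IH; lia].
  apply (expect_ext (valid_state K (S n))); [apply dist_law; lia|].
  intros s Hs; apply step_mass; assumption.
Qed.

Lemma exp_le_compat x y : x <= y -> exp x <= exp y.
Proof. intros [Hxy| ->]; [left; apply exp_increasing, Hxy|right; reflexivity]. Qed.

Lemma dist_exp_moment K n c : (n < K * K)%nat ->
  (forall m, (m <= n)%nat -> INR m / (INR (K * K) - INR m) <= c) ->
  expect (fun s => exp (INR (sD s))) (Defs.dist K (S n)) <= exp (2 * c * INR n).
Proof.
  induction n as [|n IH]; intros Hn Hc.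
  - unfold expect; simpl; rewrite Rmult_0_r, exp_0; lra.
  - rewrite dist_SS, expect_bind.
    apply Rle_trans with (expect (fun s => exp (2 * c) * exp (INR (sD s))) (Defs.dist K (S n))).
    + apply (expect_le (valid_state K (S n))); [apply dist_law; lia|]; intros s Hs.
      eapply Rle_trans; [apply step_exp_moment; assumption|].
      apply Rmult_le_compat_r; [left; apply exp_pos|].
      apply exp_le_compat; specialize (Hc (S n) (le_n _)); lra.
    + rewrite expect_scale, S_INR, Rmult_plus_distr_l, Rmult_1_r, Rplus_comm, exp_plus.
      apply Rmult_le_compat_l; [left; apply exp_pos|].
      apply IH; [lia|intros m Hm; apply Hc; lia].
Qed.

Lemma filled_ratio_le K m N : (m <= N)%nat -> (N < K * K)%nat ->
  INR m / (INR (K * K) - INR m) <= INR N / (INR (K * K) - INR N).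
Proof.
  intros HmN HN; apply le_INR in HmN; apply lt_INR in HN; pose proof (pos_INR m).
  unfold Rdiv; apply Rmult_le_compat; try lra.
  - left; apply Rinv_0_lt_compat; lra.
  - apply Rinv_le_contravar; lra.
Qed.

Lemma probD_lt_tail K N b : (1 <= N)%nat -> (N < K * K)%nat ->
  Rabs (probD_lt K N b - 1) <= exp (2 * (INR N / (INR (K * K) - INR N)) * INR N - b).
Proof.
  intros HN1 HN; destruct N as [|n]; [lia|].
  set (c := INR (S n) / (INR (K * K) - INR (S n))).
  assert (Hc : 0 <= c).
  { apply Rle_mult_inv_pos; [apply pos_INR|pose proof (lt_INR _ _ HN); lra]. }
  rewrite probD_lt_expect.
  eapply Rle_trans.
  { apply (expect_lt_indicator_bound (valid_state K (S n)) (fun s => INR (sD s)));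
      [apply dist_law|apply dist_mass]; lia. }
  unfold Rminus; rewrite Rplus_comm, exp_plus.
  apply Rmult_le_compat_l; [left; apply exp_pos|].
  eapply Rle_trans; [apply (dist_exp_moment K n c); [lia|]|].
  - intros m Hm; apply filled_ratio_le; lia.
  - apply exp_le_compat, Rmult_le_compat_l; [lra|rewrite S_INR; lra].
Qed.

Lemma Rpower_INR_unbounded b M : 0 < b ->
  exists N0, forall K, (N0 <= K)%nat -> M <= Rpower (INR K) b.
Proof.
  intros Hb; destruct (INR_archimed 1 (exp (Rabs M / b))) as [N0 HN0]; [lra|].
  exists N0; intros K HK; apply le_INR in HK.
  pose proof (exp_pos (Rabs M / b)).
  assert (Hln : Rabs M / b < ln (INR K)).
  { rewrite <- (ln_exp (Rabs M / b)); apply ln_increasing; lra. }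
  assert (Rabs M < b * ln (INR K)).
  { apply (Rmult_lt_compat_l b) in Hln; [|assumption].
    replace (b * (Rabs M / b)) with (Rabs M) in Hln by (field; lra); assumption. }
  unfold Rpower; pose proof (exp_ineq1_le (b * ln (INR K))); pose proof (Rle_abs M); lra.
Qed.

Lemma tK_floor alpha K :
  INR (tK alpha K) <= Rpower (INR K) (1 + alpha) < INR (tK alpha K) + 1.
Proof.
  set (x := Rpower (INR K) (1 + alpha)).
  assert (0 < x) by apply exp_pos.
  destruct (base_Int_part x) as [Hfl Hup].
  assert (Hnn : (0 <= Int_part x)%Z).
  { assert (-1 < Int_part x)%Z by (apply lt_IZR; lra); lia. }
  unfold tK; fold x; rewrite INR_IZR_INZ, Z2Nat.id by assumption; lra.
Qed.

Lemma moment_exponent_bound K N u : 1 <= u -> 2 * u <= INR K -> INR N <= INR K * u ->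
  2 * (INR N / (INR (K * K) - INR N)) * INR N <= 4 * (u * u).
Proof.
  intros Hu HKu HN; rewrite mult_INR; pose proof (pos_INR N).
  assert (Hden : INR K * INR K / 2 <= INR K * INR K - INR N) by nra.
  apply (Rmult_le_reg_r (INR K * INR K - INR N)); [nra|].
  replace (2 * (INR N / (INR K * INR K - INR N)) * INR N * (INR K * INR K - INR N))
    with (2 * (INR N * INR N)) by (field; nra).
  assert (INR N * INR N <= (INR K * u) * (INR K * u)) by nra.
  nra.
Qed.

Lemma prob_tail_bound alpha K : 0 < alpha < 1 -> (2 <= K)%nat ->
  2 <= Rpower (INR K) (1 - alpha) ->
  Rabs (probD_lt K (tK alpha K) (6 * Rpower (INR K) (2 * alpha)) - 1)
    <= exp (- 2 * Rpower (INR K) (2 * alpha)).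
Proof.
  intros Ha HK2 HK'.
  assert (HK : 2 <= INR K) by (apply (le_INR 2); assumption).
  set (u := Rpower (INR K) alpha).
  assert (Hu : 1 <= u).
  { rewrite <- (Rpower_O (INR K)) by lra; apply Rle_Rpower; lra. }
  assert (HKu : INR K = u * Rpower (INR K) (1 - alpha)).
  { unfold u; rewrite <- Rpower_plus, Rplus_minus, Rpower_1; lra. }
  assert (H2a : Rpower (INR K) (2 * alpha) = u * u).
  { unfold u; rewrite <- Rpower_plus; f_equal; ring. }
  assert (H1a : Rpower (INR K) (1 + alpha) = INR K * u).
  { unfold u; rewrite Rpower_plus, Rpower_1; lra. }
  pose proof (tK_floor alpha K) as Hfl; rewrite H1a in Hfl.
  assert (HN1 : (1 <= tK alpha K)%nat).
  { apply INR_lt; simpl; nra. }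
  assert (HN : (tK alpha K < K * K)%nat).
  { apply INR_lt; rewrite mult_INR; nra. }
  rewrite H2a; eapply Rle_trans; [apply probD_lt_tail; lia|].
  apply exp_le_compat.
  pose proof (moment_exponent_bound K (tK alpha K) u Hu ltac:(nra) ltac:(lra)); lra.
Qed.

Theorem lemma6p3 (alpha : R) (Ha : 0 < alpha < 1) :
  Un_cv (fun K : nat => probD_lt K (tK alpha K) (6 * Rpower (INR K) (2 * alpha))) 1.
Proof.
  intros eps Heps.
  destruct (Rpower_INR_unbounded alpha (Rabs (ln eps) + 1)) as [N1 H1]; [lra|].
  destruct (Rpower_INR_unbounded (1 - alpha) 2) as [N2 H2]; [lra|].
  exists (max (max N1 N2) 2); intros K HK; unfold R_dist.
  eapply Rle_lt_trans; [apply prob_tail_bound; [assumption|lia|apply H2; lia]|].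
  rewrite <- (exp_ln eps Heps); apply exp_increasing.
  specialize (H1 K ltac:(lia)).
  replace (2 * alpha) with (alpha + alpha) by ring; rewrite Rpower_plus.
  pose proof (Rle_abs (- ln eps)); rewrite Rabs_Ropp in *; nra.
Qed.
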